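(* The $2\times2\times2$ quaternion tensor $$T=\left(\begin{bmatrix}1&0\\0&1\end{bmatrix};\begin{bmatrix}0&1\\0&0\end{bmatrix}\right)$$ has $\mathrm{rank}(T)=3$.
   Context: $\mathbb{H}$ denotes the real quaternions. An $n_1\times n_2\times n_3$ quaternion tensor is an array $T=(T_{ijk})$ with entries in $\mathbb{H}$, $1\le i\le n_1$, $1\le j\le n_2$, $1\le k\le n_3$; it is written $T=(A_1;\dots;A_{n_2})$ where the frontal slice $A_j$ is the $n_1\times n_3$ matrix $(T_{ijk})_{i,k}$. A nonzero tensor is simple if $T_{ijk}=a_ib_jc_k$ (quaternion product in this order) for some $\vec a\in\mathbb{H}^{n_1},\vec b\in\mathbb{H}^{n_2},\vec c\in\mathbb{H}^{n_3}$. The rank of $T$ is the least number of simple tensors summing to $T$. *)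

From mathcomp Require Import all_boot all_order all_algebra.
From mathcomp Require Import reals.
Set Implicit Arguments. Unset Strict Implicit. Unset Printing Implicit Defensive.
Import Order.TTheory GRing.Theory Num.Theory.
Local Open Scope ring_scope.

Record quat (R : realType) := Quat { qre : R; qi : R; qj : R; qk : R }.

Definition qzero (R : realType) : quat R := Quat 0 0 0 0.
Definition qone (R : realType) : quat R := Quat 1 0 0 0.

Definition qadd (R : realType) (p q : quat R) : quat R :=
  Quat (qre p + qre q) (qi p + qi q) (qj p + qj q) (qk p + qk q).

(* Hamilton product: i^2 = j^2 = k^2 = ijk = -1. *)
Definition qmul (R : realType) (p q : quat R) : quat R :=
  Quat (qre p * qre q - qi p * qi q - qj p * qj q - qk p * qk q)
       (qre p * qi q + qi p * qre q + qj p * qk q - qk p * qj q)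
       (qre p * qj q - qi p * qk q + qj p * qre q + qk p * qi q)
       (qre p * qk q + qi p * qj q - qj p * qi q + qk p * qre q).

Definition qtensor (R : realType) (n1 n2 n3 : nat) :=
  'I_n1 -> 'I_n2 -> 'I_n3 -> quat R.

Definition qtensor_zero (R : realType) (n1 n2 n3 : nat) : qtensor R n1 n2 n3 :=
  fun _ _ _ => qzero R.

Definition simple_qtensor (R : realType) (n1 n2 n3 : nat)
    (T : qtensor R n1 n2 n3) : Prop :=
  (exists i j k, T i j k <> qzero R) /\
  exists (a : 'I_n1 -> quat R) (b : 'I_n2 -> quat R) (c : 'I_n3 -> quat R),
    forall i j k, T i j k = qmul (qmul (a i) (b j)) (c k).

Definition sum_of_simple (R : realType) (n1 n2 n3 : nat) (r : nat)
    (T : qtensor R n1 n2 n3) : Prop :=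
  exists S : 'I_r -> qtensor R n1 n2 n3,
    (forall l, simple_qtensor (S l)) /\
    forall i j k, T i j k = \big[@qadd R/qzero R]_(l < r) S l i j k.

Definition qtensor_rank_is (R : realType) (n1 n2 n3 : nat)
    (T : qtensor R n1 n2 n3) (r : nat) : Prop :=
  sum_of_simple r T /\ forall r', sum_of_simple r' T -> (r <= r')%N.

(* The tensor T = (A_1; A_2), A_1 = [[1,0],[0,1]], A_2 = [[0,1],[0,0]],
   with T_{ijk} = (A_j)_{ik} (indices 0-based). *)
Definition T_ex (R : realType) : qtensor R 2 2 2 :=
  fun i j k =>
    if (j == 0 :> nat) then (if (i == k :> nat) then qone R else qzero R)
    else (if ((i == 0 :> nat) && (k == 1 :> nat)) then qone R else qzero R).

From HB Require Import structures.
From mathcomp Require Import all_boot all_order all_algebra.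
From mathcomp Require Import reals ring lra.
Set Implicit Arguments. Unset Strict Implicit. Unset Printing Implicit Defensive.
Import Order.TTheory GRing.Theory Num.Theory.
Local Open Scope ring_scope.

(* Upper bound: T = e1 (x) e1 (x) e1 + e2 (x) e1 (x) e2 + e1 (x) e2 (x) e2 is a
   sum of three unit tensors, over any nontrivial ring.

   Lower bound, over any division ring D: a decomposition with fewer terms
   can be padded with zero terms to exactly two, T = a b c + a' b' c'.  Take a
   nonzero row vector (w0, w1) annihilating the column (a'_1, a'_2) from the
   left and put s = w0 a_1 + w1 a_2.  Contracting the first index of T with
   (w0, w1) kills the second term and gives s b_1 c = (w0, w1) and
   s b_2 c = (0, w0); since D has no zero divisors this forces b_2 = 0.  By
   symmetry b'_2 = 0 too, so the second slice E_12 of T would vanish. *)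

Section TensorsOverRings.
Variable D : nzRingType.

(* t is a product tensor: t_ijk = a_i b_j c_k.  Unlike a simple tensor it may
   be zero, which makes padding a decomposition with zero terms possible. *)
Definition product_tensor (n1 n2 n3 : nat) (t : 'I_n1 -> 'I_n2 -> 'I_n3 -> D)
    : Prop :=
  exists (a : 'I_n1 -> D) (b : 'I_n2 -> D) (c : 'I_n3 -> D),
    forall i j k, t i j k = a i * b j * c k.

Definition sum_of_products (n1 n2 n3 r : nat)
    (T : 'I_n1 -> 'I_n2 -> 'I_n3 -> D) : Prop :=
  exists S : 'I_r -> 'I_n1 -> 'I_n2 -> 'I_n3 -> D,
    (forall l, product_tensor (S l)) /\
    forall i j k, T i j k = \sum_(l < r) S l i j k.

Lemma sum_of_products_widen (n1 n2 n3 r m : nat)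
    (T : 'I_n1 -> 'I_n2 -> 'I_n3 -> D) :
  (r <= m)%N -> sum_of_products r T -> sum_of_products m T.
Proof.
move=> le_rm [S [S_prod T_sum]].
pose F (l : nat) := if insub l is Some l' then S l' else fun _ _ _ => 0 : D.
exists (fun l : 'I_m => F l); split=> [l|i j k].
  rewrite /F; case: insubP => [l' _ _|_]; first exact: S_prod.
  by exists (fun _ => 0), (fun _ => 0), (fun _ => 0) => i j k; rewrite !mul0r.
rewrite T_sum (eq_bigr (fun l : 'I_r => F l i j k)) => [|l _]; last by rewrite /F valK.
rewrite (big_ord_widen m (fun l => F l i j k) le_rm) big_mkcond /=.
by apply: eq_bigr => l _; case: ifP => // l_ge_r; rewrite /F insubF.
Qed.

Definition pencilT : 'I_2 -> 'I_2 -> 'I_2 -> D :=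
  fun i j k =>
    if (j == 0 :> nat) then (if (i == k :> nat) then 1 else 0)
    else (if ((i == 0 :> nat) && (k == 1 :> nat)) then 1 else 0).

Definition unit_vec (n : nat) (p : 'I_n) : 'I_n -> D :=
  fun i => if i == p then 1 else 0.

Definition unit_tensor (n1 n2 n3 : nat) (p : 'I_n1) (q : 'I_n2) (r : 'I_n3)
    : 'I_n1 -> 'I_n2 -> 'I_n3 -> D :=
  fun i j k => unit_vec p i * unit_vec q j * unit_vec r k.

Lemma unit_tensor_product (n1 n2 n3 : nat) (p : 'I_n1) (q : 'I_n2) (r : 'I_n3) :
  product_tensor (unit_tensor p q r).
Proof. by exists (unit_vec p), (unit_vec q), (unit_vec r). Qed.

Lemma unit_tensor_diag (n1 n2 n3 : nat) (p : 'I_n1) (q : 'I_n2) (r : 'I_n3) :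
  unit_tensor p q r p q r = 1.
Proof. by rewrite /unit_tensor /unit_vec !eqxx !mulr1. Qed.

Definition pencil_support (l : 'I_3) : 'I_2 * 'I_2 * 'I_2 :=
  nth (ord0, ord0, ord0)
    [:: (ord0, ord0, ord0); (ord_max, ord0, ord_max); (ord0, ord_max, ord_max)] l.

Definition pencil_terms (l : 'I_3) : 'I_2 -> 'I_2 -> 'I_2 -> D :=
  unit_tensor (pencil_support l).1.1 (pencil_support l).1.2 (pencil_support l).2.

Lemma pencilT_decomposition (i j k : 'I_2) :
  pencilT i j k = \sum_(l < 3) pencil_terms l i j k.
Proof.
rewrite !big_ord_recr big_ord0 /= /pencil_terms /pencil_support /=.
rewrite /pencilT /unit_tensor /unit_vec.
by case: i => [[|[|?]] ?] //; case: j => [[|[|?]] ?] //; case: k => [[|[|?]] ?] //=;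
  rewrite !(mul1r, mulr1, mul0r, mulr0, add0r, addr0).
Qed.

Lemma sum_ord2 (F : 'I_2 -> D) : \sum_(l < 2) F l = F ord0 + F ord_max.
Proof. by rewrite big_ord_recl big_ord1; congr (_ + F _); apply: val_inj. Qed.

Section DivisionRing.
Hypothesis left_inverse : forall y : D, y != 0 -> exists z, z * y = 1.

Lemma divring_mul_eq0 (x y : D) : (x * y == 0) = (x == 0) || (y == 0).
Proof.
apply/idP/idP => [/eqP xy0|/orP[]/eqP eq0]; last 2 first.
- by rewrite eq0 mul0r.
- by rewrite eq0 mulr0.
have [//|/left_inverse [z zx1]] := eqVneq x 0.
by rewrite /= -[y]mul1r -zx1 -mulrA xy0 mulr0.
Qed.

Lemma left_annihilator (x y : D) :
  exists w0 w1 : D, ((w0 != 0) || (w1 != 0)) /\ w0 * x + w1 * y = 0.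
Proof.
have [->|/left_inverse [z zy1]] := eqVneq y 0.
  by exists 0, 1; rewrite oner_neq0 orbT mul0r mulr0 addr0.
exists 1, (- (x * z)); rewrite oner_neq0; split=> //.
by rewrite mul1r mulNr -mulrA zy1 mulr1 subrr.
Qed.

Lemma pencil_coefficient_vanishes (s b g u v w0 w1 : D) :
  (w0 != 0) || (w1 != 0) ->
  s * b * u = w0 -> s * b * v = w1 -> s * g * u = 0 -> s * g * v = w0 -> g = 0.
Proof.
move=> w_neq0 sbu sbv sgu sgv.
have sg0 : s * g = 0.
  apply/eqP; apply: contraTT w_neq0 => sg_neq0.
  have u0 : u = 0 by apply/eqP; move/eqP: sgu; rewrite divring_mul_eq0 (negbTE sg_neq0).
  have w00 : w0 = 0 by rewrite -sbu u0 mulr0.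
  have v0 : v = 0.
    by apply/eqP; move/eqP: sgv; rewrite w00 divring_mul_eq0 (negbTE sg_neq0).
  by rewrite -sbv v0 w00 mulr0 eqxx.
move/eqP: sg0; rewrite divring_mul_eq0 => /orP[/eqP s0|/eqP //].
by move: w_neq0; rewrite -sbu -sbv s0 !mul0r eqxx.
Qed.

Lemma pencil_term_second_slice (S : 'I_2 -> 'I_2 -> 'I_2 -> 'I_2 -> D) :
  (forall l, product_tensor (S l)) ->
  (forall i j k, pencilT i j k = \sum_(l < 2) S l i j k) ->
  forall i k, S ord0 i ord_max k = 0.
Proof.
move=> S_prod T_sum.
have [a [b [c Sa]]] := S_prod ord0.
have [a' [b' [c' Sb]]] := S_prod ord_max.
have [w0 [w1 [w_neq0 annih]]] := left_annihilator (a' ord0) (a' ord_max).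
pose s := w0 * a ord0 + w1 * a ord_max.
(* Contracting the first index with (w0, w1) leaves only the first term. *)
have contract j k : w0 * pencilT ord0 j k + w1 * pencilT ord_max j k = s * b j * c k.
  rewrite !T_sum !sum_ord2 !Sa !Sb.
  by rewrite !mulrDr !mulrA addrACA -!mulrDl annih !mul0r addr0.
have E00 := contract ord0 ord0; have E01 := contract ord0 ord_max.
have E10 := contract ord_max ord0; have E11 := contract ord_max ord_max.
rewrite /pencilT /= !(mulr1, mulr0, addr0, add0r) in E00 E01 E10 E11.
have b1_0 := pencil_coefficient_vanishes w_neq0 (esym E00) (esym E01)
  (esym E10) (esym E11).
by move=> i k; rewrite Sa b1_0 mulr0 mul0r.
Qed.

Lemma pencilT_not_two_terms : ~ sum_of_products 2 pencilT.
Proof.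
move=> [S [S_prod T_sum]].
have S0 := pencil_term_second_slice S_prod T_sum.
have S1 : forall i k, S (rev_ord ord0) i ord_max k = 0.
  apply: (pencil_term_second_slice (S := fun l => S (rev_ord l)))
    => [l|i j k]; first exact: S_prod.
  by rewrite T_sum (reindex_inj rev_ord_inj).
have rev0 : rev_ord ord0 = ord_max :> 'I_2 by apply: val_inj.
rewrite rev0 in S1.
have := T_sum ord0 ord_max ord_max.
by rewrite sum_ord2 S0 S1 addr0 /pencilT /=; apply/eqP; rewrite oner_neq0.
Qed.

Lemma pencilT_terms_ge3 (r : nat) : sum_of_products r pencilT -> (3 <= r)%N.
Proof.
move=> T_sum; rewrite leqNgt; apply/negP => r_lt3.
by apply: pencilT_not_two_terms; exact: sum_of_products_widen T_sum.
Qed.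

End DivisionRing.
End TensorsOverRings.

Definition quat_coords (R : realType) (q : quat R) : R * R * R * R :=
  (qre q, qi q, qj q, qk q).

Definition quat_of_coords (R : realType) (x : R * R * R * R) : quat R :=
  let: (a, b, c, d) := x in Quat a b c d.

Lemma quat_coordsK (R : realType) : cancel (@quat_coords R) (@quat_of_coords R).
Proof. by case. Qed.

HB.instance Definition _ (R : realType) :=
  Choice.copy (quat R) (can_type (@quat_coordsK R)).

Definition qopp (R : realType) (q : quat R) : quat R :=
  Quat (- qre q) (- qi q) (- qj q) (- qk q).

Section QuaternionRing.
Variable R : realType.

Ltac quat_ring :=
  repeat match goal with x : quat R |- _ => case: x => ???? end;
  rewrite /qmul /qadd /qopp /qzero /qone /=; f_equal; ring.

Lemma qaddA : associative (@qadd R). Proof. by move=> *; quat_ring. Qed.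
Lemma qaddC : commutative (@qadd R). Proof. by move=> *; quat_ring. Qed.
Lemma qadd0q : left_id (qzero R) (@qadd R). Proof. by move=> *; quat_ring. Qed.
Lemma qaddNq : left_inverse (qzero R) (@qopp R) (@qadd R).
Proof. by move=> *; quat_ring. Qed.
Lemma qmulA : associative (@qmul R). Proof. by move=> *; quat_ring. Qed.
Lemma qmul1q : left_id (qone R) (@qmul R). Proof. by move=> *; quat_ring. Qed.
Lemma qmulq1 : right_id (qone R) (@qmul R). Proof. by move=> *; quat_ring. Qed.
Lemma qmulDl : left_distributive (@qmul R) (@qadd R).
Proof. by move=> *; quat_ring. Qed.
Lemma qmulDr : right_distributive (@qmul R) (@qadd R).
Proof. by move=> *; quat_ring. Qed.
Lemma qone_neq0 : qone R != qzero R.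
Proof. by apply/eqP => /(f_equal (@qre R)) /= /eqP; rewrite oner_eq0. Qed.

End QuaternionRing.

HB.instance Definition _ (R : realType) := GRing.isNzRing.Build (quat R)
  (@qaddA R) (@qaddC R) (@qadd0q R) (@qaddNq R) (@qmulA R) (@qmul1q R)
  (@qmulq1 R) (@qmulDl R) (@qmulDr R) (@qone_neq0 R).

Section QuaternionDivision.
Variable R : realType.

Definition qnorm2 (q : quat R) : R :=
  qre q ^+ 2 + qi q ^+ 2 + qj q ^+ 2 + qk q ^+ 2.

Lemma qnorm2_eq0 (q : quat R) : qnorm2 q = 0 -> q = 0.
Proof.
case: q => a b c d; rewrite /qnorm2 /= => N0.
suff [-> -> -> ->] : [/\ a = 0, b = 0, c = 0 & d = 0] by [].
by split; nra.
Qed.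

(* q^* / |q|^2 is a left inverse of every nonzero quaternion q. *)
Lemma quat_left_inverse (q : quat R) : q != 0 -> exists z, z * q = 1.
Proof.
move=> q_neq0.
have : qnorm2 q != 0 by apply: contraNneq q_neq0 => /qnorm2_eq0 ->.
case: q {q_neq0} => a b c d; rewrite /qnorm2 /= => N_neq0.
pose N := a ^+ 2 + b ^+ 2 + c ^+ 2 + d ^+ 2.
exists (Quat (a / N) (- b / N) (- c / N) (- d / N)).
change (qmul (Quat (a / N) (- b / N) (- c / N) (- d / N)) (Quat a b c d) = qone R).
by rewrite /qmul /qone /N /=; congr Quat; field.
Qed.

End QuaternionDivision.

Theorem mainTheorem6 (R : realType) : qtensor_rank_is (T_ex R) 3.
Proof.
split.
- exists (@pencil_terms (quat R)); split=> [l|]; last exact: pencilT_decomposition.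
  split; last exact: unit_tensor_product.
  exists (pencil_support l).1.1, (pencil_support l).1.2, (pencil_support l).2.
  by rewrite /pencil_terms unit_tensor_diag; apply/eqP; exact: oner_neq0.
- move=> r [S [S_simple T_sum]].
  apply: (pencilT_terms_ge3 (@quat_left_inverse R)).
  by exists S; split=> [l|//]; exact: (S_simple l).2.
Qed.
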